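(* Assume (C0), (C1), (C2). Then, as $k\to\infty$ over $\mathbb{N}_{odd}$, $$\|\Phi_k\|_{L^2(0,\infty)}=O(1),\qquad \|\Phi_k'\|_{L^2(0,\infty)}=O(k),\qquad \|\Phi_k'\|_{L^\infty(0,\infty)}=O(k^{3/2}).$$ In particular $|\Phi_k'(0)|=O(k^{3/2})$.
   Context: Let $\omega>0$; $\mathbb{N}_{odd}$ is the set of positive odd integers. (C0): $g\in L^\infty(\mathbb{R})$ even, $g\not\equiv0$, $h=\gamma\delta_0$ with $\gamma\in\mathbb{R}\setminus\{0\}$. For $k\in\mathbb{N}_{odd}$, $L_k=-\frac{d^2}{dx^2}-k^2\omega^2g$ on $L^2(\mathbb{R})$ with domain $H^2(\mathbb{R})$; $\sigma_D(L_k)$ is the spectrum of $L_k$ restricted to $\{\varphi\in H^2(\mathbb{R}):\varphi(0)=0\}$. (C1): for all $k\in\mathbb{N}_{odd}$, $0\notin\sigma_{ess}(L_k)\cup\sigma_D(L_k)$. Under (C0),(C1) fix for each $k\in\mathbb{N}_{odd}$ a function $\Phi_k\in H^2(0,\infty)$ with $L_k\Phi_k=0$ on $(0,\infty)$ and $\Phi_k(0)=1$. (C2): there exist $\rho,M>0$ with $|\Phi_k(x)|\le Me^{-\rho x}$ for $x\ge0$, $k\in\mathbb{N}_{odd}$. *)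

From HB Require Import structures.
From mathcomp Require Import all_boot all_order all_algebra.
From mathcomp Require Import all_classical all_reals all_analysis.
Set Implicit Arguments. Unset Strict Implicit. Unset Printing Implicit Defensive.
Import Order.TTheory GRing.Theory Num.Theory.
Local Open Scope classical_set_scope.
Local Open Scope ring_scope.

Section Defs.
Variable R : realType.
Local Notation mu := (@lebesgue_measure R).

Definition L2 (D : set R) (f : R -> R) : Prop :=
  measurable_fun D f /\ (\int[mu]_(x in D) ((f x) ^+ 2)%:E < +oo)%E.

Definition L2norm (D : set R) (f : R -> R) : \bar R :=
  ((\int[mu]_(x in D) ((f x) ^+ 2)%:E) `^ (2^-1))%E.

Definition oint (a b : R) (u : R -> R) : R :=
  if a <= b then \int[mu]_(t in `[a, b]) u t else - \int[mu]_(t in `[b, a]) u t.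

(* f in H^2(R) with (continuous representatives of) weak derivatives u = f', v = f'' *)
Definition H2R (f u v : R -> R) : Prop :=
  [/\ L2 setT f, L2 setT u, L2 setT v,
      forall x, f x = f 0 + oint 0 x u &
      forall x, u x = u 0 + oint 0 x v].

(* f in H^2(0,oo) (restricted to [0,oo)) with weak derivatives u = f', v = f'' ;
   values at 0 are those of the continuous extensions *)
Definition H2half (f u v : R -> R) : Prop :=
  [/\ L2 `]0, +oo[ f, L2 `]0, +oo[ u, L2 `]0, +oo[ v,
      forall x, 0 <= x -> f x = f 0 + oint 0 x u &
      forall x, 0 <= x -> u x = u 0 + oint 0 x v].

(* Domain of the Dirichlet realization at 0: f in L^2(R), f in H^2 on each of
   (-oo,0) and (0,oo), f(0-) = f(0+) = 0 (u = f' may jump at 0). *)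
Definition DirDom (f u v : R -> R) : Prop :=
  [/\ L2 setT f /\ L2 setT u /\ L2 setT v, f 0 = 0,
      forall x, f x = oint 0 x u,
      forall x, 0 <= x -> u x = u 0 + oint 0 x v &
      exists c, forall x, x < 0 -> u x = c + oint 0 x v].

Definition Lk (omega : R) (g : R -> R) (k : nat) (f v : R -> R) : R -> R :=
  fun x => - v x - (k%:R) ^+ 2 * omega ^+ 2 * g x * f x.

(* 0 in the essential spectrum of L_k (operator on L^2(R) with domain H^2(R)),
   via Weyl's criterion: a singular Weyl sequence exists. *)
Definition zero_in_ess (omega : R) (g : R -> R) (k : nat) : Prop :=
  exists f u v : nat -> R -> R,
    [/\ forall n, H2R (f n) (u n) (v n),
        forall n, \int[mu]_x ((f n x) ^+ 2) = 1,
        forall phi, L2 setT phi ->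
          (fun n => \int[mu]_x (f n x * phi x)) @ \oo --> 0 &
        (fun n => \int[mu]_x ((Lk omega g k (f n) (v n) x) ^+ 2)) @ \oo --> 0].

(* 0 in the Dirichlet spectrum: L_k on the Dirichlet domain is not a bijection
   onto L^2(R) (modulo a.e. equality). *)
Definition zero_in_dir (omega : R) (g : R -> R) (k : nat) : Prop :=
  ~ ( (forall f u v, DirDom f u v ->
         {ae mu, forall x, Lk omega g k f v x = 0} -> {ae mu, forall x, f x = 0})
    /\ (forall w, L2 setT w -> exists f u v, DirDom f u v /\
         {ae mu, forall x, Lk omega g k f v x = w x}) ).

End Defs.

From HB Require Import structures.
From mathcomp Require Import all_boot all_order all_algebra.
From mathcomp Require Import all_classical all_reals all_analysis.
From mathcomp Require Import measurable_realfun.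
From mathcomp Require Import lra ring.
Import Order.TTheory GRing.Theory Num.Theory.
Local Open Scope classical_set_scope.
Local Open Scope ring_scope.

(* Write u = Phi_k' and v = Phi_k''. The equation L_k Phi_k = 0 gives
   |v| <= c k^2 |Phi_k| with c = omega^2 |g|_oo, and (C2) gives
   |Phi_k(t)| <= M e^{-rho t}. On a window [x, x + h] the Taylor-type identity
   h u(x) = Phi_k(x + h) - Phi_k(x) - int_x^{x+h} (u - u(x)) yields
   h |u(x)| <= 2 M e^{-rho x} + c k^2 M e^{-rho x} h^2, and the choice h = 1/k
   gives |u(x)| <= (2 + c) M k e^{-rho x}. Integrating the squares of these
   exponential bounds gives the L^2 estimates; the pointwise bound O(k) is
   stronger than the claimed O(k^{3/2}). *)

Section interval_integrals.
Context {R : realType}.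
Local Notation mu := (@lebesgue_measure R).

Lemma lebesgue_measure_itvcc (a b : R) : a <= b -> mu `[a, b] = (b - a)%:E.
Proof.
move=> ab; rewrite lebesgue_measure_itv /= lte_fin.
case: (ltP a b) => [_|ba]; first by rewrite EFinB.
have -> : b = a by apply/eqP; rewrite eq_le ab ba.
by rewrite subrr.
Qed.

Lemma ae_neq0 : {ae mu, forall t : R, t != 0}.
Proof.
exists [set 0]; split => //; first by rewrite lebesgue_measure_set1.
by move=> t /= /negP; rewrite negbK => /eqP.
Qed.

Lemma measurable_fun_itvoo_itvco {a : R} {w : R -> R} :
  measurable_fun `]a, +oo[ w -> measurable_fun `[a, +oo[ w.
Proof.
move=> mw.
have -> : `[a, +oo[%classic = [set a] `|` `]a, +oo[%classic.
  apply/seteqP; split => t /=; rewrite !in_itv /= !andbT.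
    by rewrite le_eqVlt => /predU1P[<-|->]; [left|right].
  by case=> [->//|/ltW].
by apply/measurable_funU => //; split => //; exact: measurable_fun_set1.
Qed.

Lemma measurable_fun_itvcc_itvco {a b y : R} {w : R -> R} : a <= b ->
  measurable_fun `[a, +oo[ w -> measurable_fun `[b, y] w.
Proof.
move=> ab; apply: measurable_funS => // t /=.
by rewrite !in_itv /= andbT => /andP[bt _]; rewrite (le_trans ab bt).
Qed.

Section ae_bounded.
Context {a b c : R} {w : R -> R}.
Hypotheses (ab : a <= b) (c_ge0 : 0 <= c) (mw : measurable_fun `[a, b] w)
           (w_bounded : {ae mu, forall t, `[a, b]%classic t -> `|w t| <= c}).

Let integral_norm_le : (\int[mu]_(t in `[a, b]) `|(w t)%:E| <= (c * (b - a))%:E)%E.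
Proof.
apply: (@le_trans _ _ (\int[mu]_(t in `[a, b]) (cst c%:E) t)%E).
  apply: ae_ge0_le_integral => //.
  by apply: measurableT_comp => //; apply/measurable_EFinP.
rewrite integral_cst //; set m := (X in (_ * X)%E).
by have -> : m = (b - a)%:E by exact: lebesgue_measure_itvcc.
Qed.

Lemma ae_bounded_integrable_itvcc : mu.-integrable `[a, b] (EFin \o w).
Proof.
apply/integrableP; split; first exact/measurable_EFinP.
by apply: le_lt_trans integral_norm_le _; rewrite ltry.
Qed.

Lemma ae_bounded_Rintegral_itvcc : `|\int[mu]_(t in `[a, b]) w t| <= c * (b - a).
Proof.
apply: le_trans (le_normr_Rintegral _ ae_bounded_integrable_itvcc) _ => //.
have fin : (\int[mu]_(t in `[a, b]) (`|w t|)%:E \is a fin_num)%E.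
  rewrite ge0_fin_numE; last by apply: integral_ge0 => t _; rewrite lee_fin.
  by apply: le_lt_trans integral_norm_le _; rewrite ltry.
by rewrite /Rintegral -lee_fin fineK.
Qed.

End ae_bounded.

Lemma Rintegral_itvcc_sub (a b c : R) (w : R -> R) : a <= b -> b <= c ->
  mu.-integrable `[a, c] (EFin \o w) ->
  \int[mu]_(t in `[a, c]) w t - \int[mu]_(t in `[a, b]) w t =
  \int[mu]_(t in `[b, c]) w t.
Proof.
move=> ab bc iw.
rewrite (@Rintegral_itvB _ w (BLeft a) (BRight c) b) ?bnd_simp //.
rewrite Rintegral_itv_obnd_cbnd //.
by apply: integrableS iw => //; apply: subset_itvr; rewrite bnd_simp.
Qed.

(* The integrand is a multiple of the exponential density of rate [r]. *)
Lemma integral_itvoo_expR_le (r A : R) : 0 < r -> 0 <= A ->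
  (\int[mu]_(x in `]0%R, +oo[) (A * expR (- r * x))%:E <= (A / r)%:E)%E.
Proof.
move=> r0 A0.
have mpdf : measurable_fun setT (EFin \o exponential_pdf r).
  by apply/measurable_EFinP; exact: measurable_exponential_pdf.
have Ar0 : 0 <= A / r by rewrite divr_ge0 // ltW.
have -> : (\int[mu]_(x in `]0%R, +oo[) (A * expR (- r * x))%:E =
    \int[mu]_(x in `]0%R, +oo[) ((A / r)%:E * (exponential_pdf r x)%:E))%E.
  apply: eq_integral => x; rewrite inE /= in_itv /= andbT => x0.
  by rewrite exponential_pdfE ?(ltW x0) // -EFinM mulrA divfK // gt_eqF.
apply: (@le_trans _ _ (\int[mu]_x ((A / r)%:E * (exponential_pdf r x)%:E))%E).
  apply: ge0_subset_integral => //=; first exact: measurable_funeM.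
  by move=> x _; rewrite -EFinM lee_fin mulr_ge0 // exponential_pdf_ge0 // ltW.
rewrite (@ge0_integralZl_EFin _ _ _ mu setT measurableT
  (fun x => (exponential_pdf r x)%:E)) //.
- by rewrite integral_exponential_pdf // mule1.
- by move=> x _; rewrite lee_fin exponential_pdf_ge0 // ltW.
Qed.

Lemma L2norm_itvoo_le_expR (w : R -> R) (A rho : R) : 0 < rho -> 0 <= A ->
  measurable_fun (`]0%R, +oo[ : set R) w ->
  (forall x, 0 < x -> `|w x| <= A * expR (- rho * x)) ->
  (L2norm `]0%R, +oo[ w <= (A * Num.sqrt (2 * rho)^-1)%:E)%E.
Proof.
move=> rho0 A0 mw hw.
have r0 : 0 < 2 * rho by rewrite mulr_gt0.
have sq_le : (\int[mu]_(x in `]0%R, +oo[) ((w x) ^+ 2)%:E <=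
              \int[mu]_(x in `]0%R, +oo[) (A ^+ 2 * expR (- (2 * rho) * x))%:E)%E.
  apply: ge0_le_integral => //.
  - by move=> x _; rewrite lee_fin sqr_ge0.
  - exact/measurable_EFinP/measurable_funX.
  - apply/measurable_EFinP/measurable_funM => //.
    exact/measurableT_comp/measurable_funM.
  - move=> x; rewrite /= in_itv /= andbT => x0; rewrite lee_fin.
    have -> : A ^+ 2 * expR (- (2 * rho) * x) = (A * expR (- rho * x)) ^+ 2.
      by rewrite exprMn -expRM_natl; congr (_ * expR _); ring.
    by rewrite -[w x ^+ 2]real_normK ?num_real // !expr2 ler_pM ?hw.
have e : (((A ^+ 2 / (2 * rho))%:E) `^ 2^-1 = (A * Num.sqrt (2 * rho)^-1)%:E)%E.
  rewrite poweR_EFin powR12_sqrt; last by rewrite divr_ge0 ?sqr_ge0 // ltW.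
  by rewrite sqrtrM ?sqr_ge0 // sqrtr_sqr ger0_norm.
rewrite /L2norm -e.
have := le_trans sq_le (integral_itvoo_expR_le _ _ r0 (sqr_ge0 A)).
apply: (gt0_ler_poweR (r := 2^-1)).
- by rewrite invr_ge0.
- by rewrite in_itv /= leey andbT integral_ge0 // => x _; rewrite lee_fin sqr_ge0.
- by rewrite in_itv /= leey andbT lee_fin divr_ge0 ?sqr_ge0 // ltW.
Qed.

End interval_integrals.

Section half_line_primitives.
Context {R : realType}.
Local Notation mu := (@lebesgue_measure R).
Context {f u v : R -> R} {c : R}.
Hypotheses (f_prim : forall t, 0 <= t -> f t = f 0 + oint 0 t u)
           (u_prim : forall t, 0 <= t -> u t = u 0 + oint 0 t v)
           (measurable_u : measurable_fun (`[0%R, +oo[ : set R) u)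
           (measurable_v : measurable_fun (`[0%R, +oo[ : set R) v)
           (c_ge0 : 0 <= c)
           (v_bounded : {ae mu, forall t, 0 < t -> `|v t| <= c}).

Let v_bounded_itvcc a b : 0 <= a ->
  {ae mu, forall t, `[a, b]%classic t -> `|v t| <= c}.
Proof.
move=> a0; apply: (filterS2 (ae_filter_ringOfSetsType mu)) v_bounded ae_neq0.
move=> t vt t0.
rewrite /= in_itv /= => /andP[at_ _]; apply: vt.
by rewrite lt_neqAle eq_sym t0 (le_trans a0 at_).
Qed.

Let integrable_v a b : 0 <= a -> a <= b -> mu.-integrable `[a, b] (EFin \o v).
Proof.
move=> a0 ab; apply: (ae_bounded_integrable_itvcc ab c_ge0).
- exact: measurable_fun_itvcc_itvco a0 measurable_v.
- exact: v_bounded_itvcc.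
Qed.

Lemma Rintegral_second_deriv x t : 0 <= x -> x <= t ->
  u t - u x = \int[mu]_(s in `[x, t]) v s.
Proof.
move=> x0 xt; have t0 := le_trans x0 xt.
rewrite (u_prim _ t0) (u_prim _ x0) /oint t0 x0 opprD addrACA subrr add0r.
by apply: Rintegral_itvcc_sub => //; exact: integrable_v.
Qed.

Let integrable_u a b : 0 <= a -> a <= b -> mu.-integrable `[a, b] (EFin \o u).
Proof.
move=> a0 ab; apply: (ae_bounded_integrable_itvcc ab (c := `|u 0| + c * b)).
- by rewrite addr_ge0 // mulr_ge0 // (le_trans a0 ab).
- exact: measurable_fun_itvcc_itvco a0 measurable_u.
apply: aeW => t /=; rewrite in_itv /= => /andP[at_ tb].
have t0 := le_trans a0 at_.
rewrite -[u t](subrK (u 0)) Rintegral_second_deriv // addrC.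
apply: le_trans (ler_normD _ _) _; rewrite lerD2l.
apply: le_trans (ae_bounded_Rintegral_itvcc t0 c_ge0 _ _) _.
- exact: measurable_fun_itvcc_itvco (lexx 0) measurable_v.
- exact: v_bounded_itvcc.
by rewrite subr0 ler_wpM2l.
Qed.

Lemma Rintegral_deriv x t : 0 <= x -> x <= t ->
  f t - f x = \int[mu]_(s in `[x, t]) u s.
Proof.
move=> x0 xt; have t0 := le_trans x0 xt.
rewrite (f_prim _ t0) (f_prim _ x0) /oint t0 x0 opprD addrACA subrr add0r.
by apply: Rintegral_itvcc_sub => //; exact: integrable_u.
Qed.

(* Comparing u with its value at [x] on the window [x, x + h]:
   [h u(x) = f(x + h) - f(x) - int_x^{x+h} (u - u(x))] and [|u - u(x)| <= V h]. *)
Lemma window_deriv_bound x h E V : 0 <= x -> 0 < h -> 0 <= V ->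
  `|f x| <= E -> `|f (x + h)| <= E ->
  {ae mu, forall t, `[x, x + h]%classic t -> `|v t| <= V} ->
  h * `|u x| <= 2 * E + V * h ^+ 2.
Proof.
move=> x0 h0 V0 fxE fxhE vV.
have xxh : x <= x + h by rewrite lerDl ltW.
have xhx : x + h - x = h by rewrite addrAC subrr add0r.
have meas_u_window : measurable_fun `[x, x + h] u :=
  measurable_fun_itvcc_itvco x0 measurable_u.
have du_le t : `[x, x + h]%classic t -> `|u t - u x| <= V * h.
  rewrite /= in_itv /= => /andP[xt th]; rewrite Rintegral_second_deriv //.
  apply: le_trans (ae_bounded_Rintegral_itvcc xt V0 _ _) _.
  - exact: measurable_fun_itvcc_itvco x0 measurable_v.
  - apply: (@filterS _ _ (ae_filter_ringOfSetsType mu)) vV => s vs /=.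
    rewrite in_itv /= => /andP[xs st]; apply: vs.
    by rewrite /= in_itv /= xs (le_trans st th).
  by rewrite ler_wpM2l // lerBlDl.
have int_du : `|\int[mu]_(s in `[x, x + h]) (u s - u x)| <= V * h * (x + h - x).
  apply: (ae_bounded_Rintegral_itvcc xxh (mulr_ge0 V0 (ltW h0))).
  - exact: measurable_funB.
  - exact: aeW.
have int_cst : mu.-integrable `[x, x + h] (EFin \o cst (u x)).
  by apply: (ae_bounded_integrable_itvcc xxh (normr_ge0 (u x))) => //; exact: aeW.
have int_duE : \int[mu]_(s in `[x, x + h]) (u s - u x) =
    f (x + h) - f x - u x * h.
  rewrite RintegralB ?integrable_u // Rintegral_cst //.
  rewrite Rintegral_deriv //; set m := (X in _ * fine X).
  have -> : m = (x + h - x)%:E by exact: lebesgue_measure_itvcc.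
  by rewrite /= xhx.
rewrite int_duE xhx in int_du.
have uxh_le : `|u x * h| <= `|f (x + h) - f x| + V * h * h.
  have -> : u x * h = f (x + h) - f x - (f (x + h) - f x - u x * h) by ring.
  by apply: le_trans (ler_normB _ _) _; rewrite lerD2l.
have := ler_normB (f (x + h)) (f x).
move: uxh_le; rewrite normrM (gtr0_norm h0) mulrC expr2 mulrA.
lra.
Qed.

End half_line_primitives.

Lemma deriv_le_expR (R : realType) (f u v : R -> R) (M rho kappa c : R) :
  (forall t, 0 <= t -> f t = f 0 + oint 0 t u) ->
  (forall t, 0 <= t -> u t = u 0 + oint 0 t v) ->
  measurable_fun (`]0%R, +oo[ : set R) u ->
  measurable_fun (`]0%R, +oo[ : set R) v ->
  0 <= M -> 0 <= rho -> 0 < kappa -> 0 <= c ->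
  (forall t, 0 <= t -> `|f t| <= M * expR (- rho * t)) ->
  {ae @lebesgue_measure R, forall t, 0 < t -> `|v t| <= c * kappa ^+ 2 * `|f t|} ->
  forall x, 0 <= x -> `|u x| <= (2 + c) * M * kappa * expR (- rho * x).
Proof.
move=> f_prim u_prim meas_u meas_v M0 rho0 kappa0 c0 f_decay v_le x x0.
have f_le a t : 0 <= a -> a <= t -> `|f t| <= M * expR (- rho * a).
  move=> a0 at_; apply: le_trans (f_decay t (le_trans a0 at_)) _.
  by rewrite ler_wpM2l // ler_expR; nra.
pose E := M * expR (- rho * x).
have kinv0 : 0 < kappa^-1 by rewrite invr_gt0.
have ck0 : 0 <= c * kappa ^+ 2 by rewrite mulr_ge0 ?sqr_ge0.
have v_bounded : {ae @lebesgue_measure R,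
    forall t, 0 < t -> `|v t| <= c * kappa ^+ 2 * M}.
  apply: (@filterS _ _ (ae_filter_ringOfSetsType _)) v_le => t vt /[dup] /vt vt' t0.
  apply: le_trans vt' _; rewrite ler_wpM2l //.
  by apply: le_trans (f_le 0 t (lexx 0) (ltW t0)) _; rewrite mulr0 expR0 mulr1.
have v_window : {ae @lebesgue_measure R,
    forall t, `[x, x + kappa^-1]%classic t -> `|v t| <= c * kappa ^+ 2 * E}.
  apply: (filterS2 (ae_filter_ringOfSetsType _)) v_le ae_neq0 => t vt t0.
  rewrite /= in_itv /= => /andP[xt _]; have t_ge0 := le_trans x0 xt.
  apply: le_trans (vt _) _; first by rewrite lt_neqAle eq_sym t0.
  by rewrite ler_wpM2l // f_le.
have := window_deriv_bound f_prim u_prim (measurable_fun_itvoo_itvco meas_u)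
  (measurable_fun_itvoo_itvco meas_v) (mulr_ge0 ck0 M0) v_bounded _ _ _ _ x0 kinv0
  (mulr_ge0 ck0 (mulr_ge0 M0 (expR_ge0 _))) (f_le x x x0 (lexx x))
  (f_le x (x + kappa^-1) x0 (ler_wpDr (ltW kinv0) (lexx x))) v_window.
have -> : c * kappa ^+ 2 * E * kappa^-1 ^+ 2 = c * E.
  by field; rewrite gt_eqF.
rewrite -(ler_pM2l kappa0) mulrA divff ?gt_eqF // mul1r => /le_trans; apply.
rewrite [X in _ <= X](_ : _ = kappa * (2 * E + c * E)) //.
by rewrite /E; ring.
Qed.

Lemma Lk_eq0_second_deriv_le (R : realType) (omega : R) (g : R -> R) (k : nat)
    (f v : R -> R) (B x : R) :
  Lk omega g k f v x = 0 -> `|g x| <= B ->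
  `|v x| <= omega ^+ 2 * B * k%:R ^+ 2 * `|f x|.
Proof.
rewrite /Lk => /eqP; rewrite subr_eq0 eqr_oppLR => /eqP -> gB.
rewrite normrN !normrM normr_nat -!expr2 real_normK ?num_real //.
have -> : omega ^+ 2 * B * k%:R ^+ 2 * `|f x| =
          k%:R ^+ 2 * omega ^+ 2 * (B * `|f x|) by ring.
rewrite -mulrA ler_wpM2l ?(mulr_ge0 (sqr_ge0 _) (sqr_ge0 _)) //.
exact: ler_wpM2r.
Qed.

Lemma Lk_solution_deriv_le_expR {R : realType} {omega : R} {g : R -> R} {k : nat}
    {f u v : R -> R} {B M rho : R} :
  H2half f u v ->
  {ae @lebesgue_measure R, forall x, 0 < x -> Lk omega g k f v x = 0} ->
  {ae @lebesgue_measure R, forall x, `|g x| <= B} ->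
  (0 < k)%N -> 0 <= M -> 0 <= rho ->
  (forall t, 0 <= t -> `|f t| <= M * expR (- rho * t)) ->
  forall x, 0 <= x -> `|u x| <= (2 + omega ^+ 2 * `|B|) * M * k%:R * expR (- rho * x).
Proof.
move=> [_ [meas_u _] [meas_v _] f_prim u_prim] Lk_f g_bounded k_gt0 M0 rho0 f_decay.
apply: deriv_le_expR f_prim u_prim meas_u meas_v M0 rho0 _ _ f_decay _.
- by rewrite ltr0n.
- by rewrite mulr_ge0 ?sqr_ge0.
apply: (filterS2 (ae_filter_ringOfSetsType _)) Lk_f g_bounded => t Lk0 gB t0.
exact: Lk_eq0_second_deriv_le (Lk0 t0) (le_trans gB (ler_norm B)).
Qed.

Theorem lemma2p3 (R : realType) (omega : R) (g : R -> R) (gamma : R)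
    (Phi dPhi d2Phi : nat -> R -> R) :
  0 < omega ->
  (* (C0): g in L^oo(R), even, not identically 0; h = gamma delta_0, gamma <> 0 *)
  measurable_fun setT g ->
  (exists B : R, {ae @lebesgue_measure R, forall x, `|g x| <= B}) ->
  {ae @lebesgue_measure R, forall x, g (- x) = g x} ->
  ~ {ae @lebesgue_measure R, forall x, g x = 0} ->
  gamma != 0 ->
  (* (C1): 0 is neither in sigma_ess(L_k) nor in sigma_D(L_k), k odd *)
  (forall k, odd k -> ~ zero_in_ess omega g k /\ ~ zero_in_dir omega g k) ->
  (* Phi_k in H^2(0,oo) (weak derivatives dPhi k, d2Phi k), L_k Phi_k = 0 on (0,oo), Phi_k(0) = 1 *)
  (forall k, odd k ->
     [/\ H2half (Phi k) (dPhi k) (d2Phi k), Phi k 0 = 1 &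
         {ae @lebesgue_measure R, forall x, 0 < x -> Lk omega g k (Phi k) (d2Phi k) x = 0}]) ->
  (* (C2) *)
  (exists rho M : R, [/\ 0 < rho, 0 < M &
     forall k, odd k -> forall x, 0 <= x -> `|Phi k x| <= M * expR (- rho * x)]) ->
  exists C : R, exists K0 : nat, forall k, odd k -> (K0 <= k)%N ->
    [/\ (L2norm (`]0%R, +oo[%classic : set R) (Phi k) <= C%:E)%E,
        (L2norm (`]0%R, +oo[%classic : set R) (dPhi k) <= (C * k%:R)%:E)%E,
        (forall x, 0 < x -> `|dPhi k x| <= C * (k%:R `^ (3 / 2))) &
        `|dPhi k 0| <= C * (k%:R `^ (3 / 2))].
Proof.
move=> _ _ [B g_bounded] _ _ _ _ Phi_sol [rho [M [rho0 M0 Phi_decay]]].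
pose D := (2 + omega ^+ 2 * `|B|) * M; pose s := Num.sqrt (2 * rho)^-1.
have D0 : 0 <= D.
  by rewrite mulr_ge0 ?(ltW M0) // addr_ge0 // mulr_ge0 ?sqr_ge0.
have s0 : 0 <= s by rewrite sqrtr_ge0.
have Ms0 : 0 <= M * s by rewrite mulr_ge0 // ltW.
have Ds0 : 0 <= D * s by exact: mulr_ge0.
exists (M * s + D * s + D), 0%N => k k_odd _.
have [Phi_H2 _ Lk_Phi] := Phi_sol k k_odd.
have [[mPhi _] [mdPhi _] _ _ _] := Phi_H2.
have k_gt0 : 0 < k%:R :> R by rewrite ltr0n odd_gt0.
have dPhi_le := Lk_solution_deriv_le_expR Phi_H2 Lk_Phi g_bounded (odd_gt0 k_odd)
  (ltW M0) (ltW rho0) (Phi_decay k k_odd).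
have dPhi_sup x : 0 <= x -> `|dPhi k x| <= (M * s + D * s + D) * k%:R `^ (3 / 2).
  move=> x0; apply: le_trans (dPhi_le x x0) _.
  have k_le : k%:R <= k%:R `^ (3 / 2) :> R by rewrite le1r_powR ?ler1n ?odd_gt0 //; lra.
  have e_le1 : expR (- rho * x) <= 1 by rewrite expR_le1; nra.
  apply: le_trans (ler_wpM2l (mulr_ge0 D0 (ltW k_gt0)) e_le1) _.
  by rewrite mulr1 ler_pM // lerDr addr_ge0.
split.
- apply: le_trans (L2norm_itvoo_le_expR _ _ _ rho0 (ltW M0) mPhi _) _.
    by move=> x x0; apply: Phi_decay => //; exact: ltW.
  by rewrite lee_fin -addrA lerDl addr_ge0.
- apply: le_trans (L2norm_itvoo_le_expR _ (D * k%:R) _ rho0 _ mdPhi _) _.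
  + by rewrite mulr_ge0 // ltW.
  + by move=> x x0; apply: dPhi_le; rewrite ltW.
  by rewrite lee_fin mulrAC ler_pM2r // -/s addrAC lerDr addr_ge0.
- by move=> x x0; apply: dPhi_sup; rewrite ltW.
- exact: dPhi_sup.
Qed.
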